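(* Consider the infinite hydrodynamic chain $\partial_{t_2}u^i=\sum_{j\in\mathbb{Z}}A^i_j(\mathbf{u})\,\partial_xu^j$, $\mathbf{u}=(u^\ell)_{\ell\in\mathbb{Z}}$, given explicitly by (with $\partial=\partial_x$) $$\partial_{t_2}u^{-k}=\big(k\,u^{-(k+1)}-(k-2)u^{-(k-1)}+u^{-k}u^1\big)\partial u^0+u^0u^{-k}\partial u^1+u^0\big(\partial u^{-(k-1)}+\partial u^{-(k+1)}\big),\quad k>2,$$ $$\partial_{t_2}u^{-2}=\big(u^{-2}u^1+2u^{-3}\big)\partial u^0+u^0u^{-2}\partial u^1+u^0\partial u^{-3}+2u^0\partial u^{-1},$$ $$\partial_{t_2}u^{-1}=\big(u^{-1}u^1+u^{-2}\big)\partial u^0+u^0u^{-1}\partial u^1+u^0\partial u^{-2},$$ $$\partial_{t_2}u^0=u^0u^1\partial u^0+(u^0)^2\partial u^1,$$ $$\partial_{t_2}u^1=\big(2u^2-(u^1)^2\big)\partial u^0-u^0u^1\partial u^1+u^0\partial u^2,$$ $$\partial_{t_2}u^k=\big((k+1)u^{k+1}-(k-1)u^{k-1}-u^ku^1\big)\partial u^0-u^0u^k\partial u^1+u^0\big(\partial u^{k+1}+\partial u^{k-1}\big),\quad k>1.$$ Then the Haantjes tensor of the matrix $A(\mathbf{u})$ vanishes identically.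
   Context: For an infinite matrix $K(\mathbf{v})=(K^i_j(\mathbf{v}))_{i,j\in\mathbb{Z}}$ each of whose rows has finitely many nonzero entries, each depending on finitely many $v^\ell$, the Nijenhuis tensor is $\mathcal N^i_{jk}=K^p_j\partial_pK^i_k-K^p_k\partial_pK^i_j-K^i_p(\partial_jK^p_k-\partial_kK^p_j)$ and the Haantjes tensor is $\mathcal H^i_{jk}=\mathcal N^i_{pr}K^p_jK^r_k-\mathcal N^p_{jr}K^i_pK^r_k-\mathcal N^p_{rk}K^i_pK^r_j+\mathcal N^p_{jk}K^i_rK^r_p$, where $\partial_\ell=\partial/\partial v^\ell$ and repeated indices are summed. *)

From Stdlib Require Import Reals ZArith.
From Coquelicot Require Import Coquelicot.
Open Scope R_scope.

Definition point := Z -> R.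

(* Matrix-valued function K(v) = (K^i_j(v)), written K i j v. *)
Definition mfun := Z -> Z -> point -> R.

Definition upd (v : point) (l : Z) (t : R) : point :=
  fun m => if Z.eqb m l then t else v m.

Definition pder (l : Z) (f : point -> R) (v : point) : R :=
  Derive (fun t => f (upd v l t)) (v l).

(* Sum over Z of a (finitely supported) family: limit of the symmetric
   partial sums sum_{-n <= m <= n} f m (exact for finitely supported f). *)
Definition zpart (f : Z -> R) (n : nat) : R :=
  sum_f_R0 (fun m => f (Z.of_nat m - Z.of_nat n)%Z) (2 * n).
Definition zsum (f : Z -> R) : R := real (Lim_seq (zpart f)).

Definition Nijenhuis (K : mfun) (i j k : Z) (v : point) : R :=
  zsum (fun p => K p j v * pder p (K i k) v)
  - zsum (fun p => K p k v * pder p (K i j) v)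
  - zsum (fun p => K i p v * (pder j (K p k) v - pder k (K p j) v)).

Definition Haantjes (K : mfun) (i j k : Z) (v : point) : R :=
  zsum (fun p => zsum (fun r => Nijenhuis K i p r v * K p j v * K r k v))
  - zsum (fun p => zsum (fun r => Nijenhuis K p j r v * K i p v * K r k v))
  - zsum (fun p => zsum (fun r => Nijenhuis K p r k v * K i p v * K r j v))
  + zsum (fun p => zsum (fun r => Nijenhuis K p j k v * K i r v * K r p v)).

Definition at_col (j a : Z) (c : R) : R := if Z.eqb j a then c else 0.

Definition A : mfun := fun i j u =>
  if (i <? -2)%Z then
    (* i = -k, k > 2 *)
    at_col j 0 (IZR (- i) * u (i - 1)%Z - IZR (- i - 2) * u (i + 1)%Z + u i * u 1%Z)
    + at_col j 1 (u 0%Z * u i)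
    + at_col j (i + 1) (u 0%Z) + at_col j (i - 1) (u 0%Z)
  else if (i =? -2)%Z then
    at_col j 0 (u (-2)%Z * u 1%Z + 2 * u (-3)%Z)
    + at_col j 1 (u 0%Z * u (-2)%Z)
    + at_col j (-3) (u 0%Z) + at_col j (-1) (2 * u 0%Z)
  else if (i =? -1)%Z then
    at_col j 0 (u (-1)%Z * u 1%Z + u (-2)%Z)
    + at_col j 1 (u 0%Z * u (-1)%Z)
    + at_col j (-2) (u 0%Z)
  else if (i =? 0)%Z then
    at_col j 0 (u 0%Z * u 1%Z) + at_col j 1 (u 0%Z ^ 2)
  else if (i =? 1)%Z then
    at_col j 0 (2 * u 2%Z - u 1%Z ^ 2)
    + at_col j 1 (- (u 0%Z * u 1%Z))
    + at_col j 2 (u 0%Z)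
  else
    (* i = k > 1 *)
    at_col j 0 (IZR (i + 1) * u (i + 1)%Z - IZR (i - 1) * u (i - 1)%Z - u i * u 1%Z)
    + at_col j 1 (- (u 0%Z * u i))
    + at_col j (i + 1) (u 0%Z) + at_col j (i - 1) (u 0%Z).

(* The Nijenhuis tensor of A has the special form
     N(X, Y) = g(X) A Y - g(Y) A X + b(X) Y - b(Y) X,
   with the 1-forms g = d(u^0 u^1) and b = -2 d((u^0)^2).  For any operator
   whose torsion has this form, expanding the Haantjes tensor
     A^2 N(X, Y) - A N(A X, Y) - A N(X, A Y) + N(A X, A Y)
   gives terms that cancel in pairs; over Z this only needs linearity of sums
   of finitely supported families, Kronecker deltas and one exchange of a
   double sum. *)

From Stdlib Require Import Reals ZArith Lia FunctionalExtensionality List.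
From Coquelicot Require Import Coquelicot.
Import ListNotations.
Open Scope R_scope.

Definition kdelta (a b : Z) : R := if Z.eqb a b then 1 else 0.

Lemma kdelta_sym a b : kdelta a b = kdelta b a.
Proof. unfold kdelta. now rewrite Z.eqb_sym. Qed.

Lemma kdelta_neq a b : a <> b -> kdelta a b = 0.
Proof. intros Hab. unfold kdelta. now destruct (Z.eqb_spec a b). Qed.

Definition finsupp (f : Z -> R) : Prop :=
  exists n : nat, forall m, (Z.of_nat n < Z.abs m)%Z -> f m = 0.

Lemma zpart_S f N :
  zpart f (S N) = f (- Z.of_nat N - 1)%Z + zpart f N + f (Z.of_nat N + 1)%Z.
Proof.
  unfold zpart.
  replace (2 * S N)%nat with (S (S (2 * N))) by lia.
  rewrite tech5, decomp_sum by lia. simpl Init.Nat.pred.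
  replace (Z.of_nat (S (S (2 * N))) - Z.of_nat (S N))%Z with (Z.of_nat N + 1)%Z by lia.
  replace (Z.of_nat 0 - Z.of_nat (S N))%Z with (- Z.of_nat N - 1)%Z by lia.
  rewrite (sum_eq _ (fun m : nat => f (Z.of_nat m - Z.of_nat N)%Z)); [reflexivity|].
  intros m _. f_equal. lia.
Qed.

Lemma zsum_window f (n : nat) :
  (forall m, (Z.of_nat n < Z.abs m)%Z -> f m = 0) -> zsum f = zpart f n.
Proof.
  intros Hf.
  assert (Hstable : forall N, (n <= N)%nat -> zpart f N = zpart f n).
  { induction N as [|N IH]; intros HN.
    - now replace n with 0%nat by lia.
    - destruct (Nat.eq_dec n (S N)) as [->|Hne]; [reflexivity|].
      rewrite zpart_S, IH, (Hf (- Z.of_nat N - 1)%Z), (Hf (Z.of_nat N + 1)%Z) by lia.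
      ring. }
  unfold zsum.
  rewrite (Lim_seq_ext_loc _ (fun _ => zpart f n)), Lim_seq_const; [reflexivity|].
  exists n. intros N HN. apply Hstable. lia.
Qed.

Lemma zsum_eventually f :
  finsupp f -> exists n, forall N, (n <= N)%nat -> zsum f = zpart f N.
Proof.
  intros [n Hf]. exists n. intros N HN. apply zsum_window.
  intros m Hm. apply Hf. lia.
Qed.

Lemma zsum_ext f g : (forall m, f m = g m) -> zsum f = zsum g.
Proof. intros H. f_equal. now apply functional_extensionality. Qed.

Lemma zsum_zero f : (forall m, f m = 0) -> zsum f = 0.
Proof.
  intros H. rewrite (zsum_window f 0) by (intros; apply H).
  unfold zpart. simpl. now rewrite H.
Qed.

Lemma finsupp_zero : finsupp (fun _ => 0).
Proof. now exists 0%nat. Qed.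

Lemma finsupp_plus f g : finsupp f -> finsupp g -> finsupp (fun m => f m + g m).
Proof.
  intros [n1 H1] [n2 H2]. exists (Nat.max n1 n2). intros m Hm.
  rewrite H1, H2 by lia. ring.
Qed.

Lemma finsupp_mult_l c f : finsupp f -> finsupp (fun m => c m * f m).
Proof. intros [n H]. exists n. intros m Hm. rewrite H by lia. ring. Qed.

Lemma finsupp_mult_r c f : finsupp f -> finsupp (fun m => f m * c m).
Proof. intros [n H]. exists n. intros m Hm. rewrite H by lia. ring. Qed.

Lemma finsupp_minus f g : finsupp f -> finsupp g -> finsupp (fun m => f m - g m).
Proof.
  intros [n1 H1] [n2 H2]. exists (Nat.max n1 n2). intros m Hm.
  rewrite H1, H2 by lia. ring.
Qed.

Lemma finsupp_kdelta a : finsupp (fun m => kdelta a m).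
Proof.
  exists (Z.to_nat (Z.abs a)). intros m Hm. apply kdelta_neq. lia.
Qed.

Lemma zsum_plus f g : finsupp f -> finsupp g ->
  zsum (fun m => f m + g m) = zsum f + zsum g.
Proof.
  intros Hf Hg.
  destruct (zsum_eventually f Hf) as [n1 E1], (zsum_eventually g Hg) as [n2 E2],
    (zsum_eventually _ (finsupp_plus f g Hf Hg)) as [n3 E3].
  set (N := Nat.max n1 (Nat.max n2 n3)).
  rewrite (E1 N), (E2 N), (E3 N) by lia. apply sum_plus.
Qed.

Lemma zsum_scal c f : finsupp f -> zsum (fun m => c * f m) = c * zsum f.
Proof.
  intros Hf.
  destruct (zsum_eventually f Hf) as [n1 E1],
    (zsum_eventually _ (finsupp_mult_l (fun _ => c) f Hf)) as [n2 E2].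
  rewrite (E1 (Nat.max n1 n2)), (E2 (Nat.max n1 n2)) by lia.
  unfold zpart. rewrite scal_sum. apply sum_eq. intros. ring.
Qed.

Lemma zsum_minus f g : finsupp f -> finsupp g ->
  zsum (fun m => f m - g m) = zsum f - zsum g.
Proof.
  intros Hf Hg.
  rewrite (zsum_ext _ (fun m => f m + -1 * g m)) by (intro; ring).
  rewrite zsum_plus, zsum_scal by (try apply finsupp_mult_l; assumption). ring.
Qed.

Lemma sum_f_R0_single (g : nat -> R) N t :
  (t <= N)%nat -> (forall m, (m <= N)%nat -> m <> t -> g m = 0) -> sum_f_R0 g N = g t.
Proof.
  induction N as [|N IH]; intros Ht H.
  - now replace t with 0%nat by lia.
  - rewrite tech5. destruct (Nat.eq_dec t (S N)) as [->|Hne].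
    + rewrite (sum_eq _ (fun _ => 0)), sum_cte by (intros; apply H; lia). ring.
    + rewrite IH, (H (S N)) by (lia || (intros; apply H; lia)). ring.
Qed.

Lemma zsum_kdelta h a : zsum (fun p => h p * kdelta a p) = h a.
Proof.
  set (n := Z.to_nat (Z.abs a)).
  rewrite (zsum_window _ n) by (intros m Hm; rewrite kdelta_neq by lia; ring).
  unfold zpart. rewrite (sum_f_R0_single _ _ (Z.to_nat (a + Z.of_nat n))).
  - replace (Z.of_nat (Z.to_nat (a + Z.of_nat n)) - Z.of_nat n)%Z with a by lia.
    unfold kdelta. rewrite Z.eqb_refl. ring.
  - lia.
  - intros m Hm Hne. rewrite kdelta_neq by lia. ring.
Qed.

Lemma zsum_kdelta_sym h a : zsum (fun p => h p * kdelta p a) = h a.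
Proof. rewrite <- (zsum_kdelta h a). apply zsum_ext. intro. now rewrite kdelta_sym. Qed.

Lemma finsupp_sum_f_R0 (G : nat -> Z -> R) N : (forall m, finsupp (G m)) ->
  finsupp (fun p => sum_f_R0 (fun m => G m p) N).
Proof.
  intros HG. induction N as [|N IH]; [apply HG|].
  apply (finsupp_plus _ (G (S N))); auto.
Qed.

Lemma zsum_sum_f_R0 (G : nat -> Z -> R) N : (forall m, finsupp (G m)) ->
  zsum (fun p => sum_f_R0 (fun m => G m p) N) = sum_f_R0 (fun m => zsum (G m)) N.
Proof.
  intros HG. induction N as [|N IH]; [reflexivity|].
  simpl. rewrite (zsum_plus _ (G (S N))), IH by (auto using finsupp_sum_f_R0). reflexivity.
Qed.

Section DoubleSums.

Variables (F : Z -> Z -> R) (n : nat).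
Hypothesis F_window : forall r p, (Z.of_nat n < Z.abs r)%Z -> F r p = 0.
Hypothesis F_finsupp : forall r, finsupp (F r).

Let F_window_sum p :
  zsum (fun r => F r p) = sum_f_R0 (fun m => F (Z.of_nat m - Z.of_nat n)%Z p) (2 * n).
Proof. exact (zsum_window _ n (fun r Hr => F_window r p Hr)). Qed.

Lemma finsupp_zsum : finsupp (fun p => zsum (fun r => F r p)).
Proof.
  destruct (finsupp_sum_f_R0 (fun m => F (Z.of_nat m - Z.of_nat n)%Z) (2 * n)) as [k Hk]; auto.
  exists k. intros p Hp. rewrite F_window_sum. auto.
Qed.

Lemma zsum_comm : zsum (fun p => zsum (fun r => F r p)) = zsum (fun r => zsum (F r)).
Proof.
  rewrite (zsum_ext _ _ F_window_sum), zsum_sum_f_R0 by auto.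
  symmetry. refine (zsum_window _ n _). intros r Hr. apply zsum_zero. auto.
Qed.

End DoubleSums.

Ltac finsupp_auto := solve [ first
  [ assumption | apply finsupp_kdelta
  | match goal with H : forall _, finsupp _ |- _ => apply H end
  | apply finsupp_plus; finsupp_auto | apply finsupp_minus; finsupp_auto
  | apply finsupp_mult_l; finsupp_auto | apply finsupp_mult_r; finsupp_auto ] ].

Ltac zsum_lin := repeat first
  [ rewrite zsum_minus by finsupp_auto | rewrite zsum_plus by finsupp_auto
  | rewrite zsum_scal by finsupp_auto ].

Section HaantjesVanishing.

Variables (K : mfun) (v : point) (g b : Z -> R).
Hypothesis K_rows : forall i, finsupp (fun p => K i p v).
Hypothesis g_finsupp : finsupp g.
Hypothesis b_finsupp : finsupp b.
Hypothesis Nijenhuis_form : forall i j k, Nijenhuis K i j k v =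
  g j * K i k v - g k * K i j v + b j * kdelta i k - b k * kdelta i j.

Let K2 i k := zsum (fun r => K i r v * K r k v).
Let K3 i k := zsum (fun r => K i r v * K2 r k).
Let gK k := zsum (fun p => g p * K p k v).
Let bK k := zsum (fun p => b p * K p k v).

Lemma K2_rows_finsupp i : finsupp (fun k => K2 i k).
Proof.
  destruct (K_rows i) as [n Hn]. apply (finsupp_zsum _ n).
  - intros r p Hr. rewrite Hn by assumption. ring.
  - intro r. finsupp_auto.
Qed.

Lemma K2_K_assoc i k : zsum (fun p => K2 i p * K p k v) = K3 i k.
Proof.
  destruct (K_rows i) as [n Hn]. unfold K3, K2.
  rewrite (zsum_ext _ (fun p => zsum (fun r => K i r v * K r p v * K p k v))).
  - rewrite (zsum_comm _ n).
    + apply zsum_ext. intro r.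
      rewrite <- zsum_scal by finsupp_auto. apply zsum_ext. intro. ring.
    + intros r p Hr. rewrite Hn by assumption. ring.
    + intro r. finsupp_auto.
  - intro p. rewrite (Rmult_comm _ (K p k v)), <- zsum_scal by finsupp_auto.
    apply zsum_ext. intro. ring.
Qed.

Lemma Haantjes_term1 i j k :
  zsum (fun p => zsum (fun r => Nijenhuis K i p r v * K p j v * K r k v)) =
  gK j * K2 i k - gK k * K2 i j + bK j * K i k v - bK k * K i j v.
Proof.
  rewrite (zsum_ext _ (fun p => K2 i k * (g p * K p j v) - gK k * (K i p v * K p j v)
                               + K i k v * (b p * K p j v) - bK k * (K p j v * kdelta i p))).
  - zsum_lin. rewrite zsum_kdelta. unfold K3, K2, gK, bK. ring.
  - intro p.
    rewrite (zsum_ext _ (fun r => (g p * K p j v) * (K i r v * K r k v)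
               - (K i p v * K p j v) * (g r * K r k v)
               + (b p * K p j v) * (K r k v * kdelta i r)
               - (kdelta i p * K p j v) * (b r * K r k v)))
      by (intro; rewrite Nijenhuis_form; ring).
    zsum_lin. rewrite zsum_kdelta. unfold K3, K2, gK, bK. ring.
Qed.

Lemma Haantjes_term2 i j k :
  zsum (fun p => zsum (fun r => Nijenhuis K p j r v * K i p v * K r k v)) =
  g j * K3 i k - gK k * K2 i j + b j * K2 i k - bK k * K i j v.
Proof.
  rewrite (zsum_ext _ (fun p => g j * (K i p v * K2 p k) - gK k * (K i p v * K p j v)
                               + b j * (K i p v * K p k v) - bK k * (K i p v * kdelta p j))).
  - zsum_lin. rewrite zsum_kdelta_sym. unfold K3, K2, gK, bK. ring.
  - intro p.
    rewrite (zsum_ext _ (fun r => (g j * K i p v) * (K p r v * K r k v)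
               - (K i p v * K p j v) * (g r * K r k v)
               + (b j * K i p v) * (K r k v * kdelta p r)
               - (kdelta p j * K i p v) * (b r * K r k v)))
      by (intro; rewrite Nijenhuis_form; ring).
    zsum_lin. rewrite zsum_kdelta. unfold K3, K2, gK, bK. ring.
Qed.

Lemma Haantjes_term3 i j k :
  zsum (fun p => zsum (fun r => Nijenhuis K p r k v * K i p v * K r j v)) =
  gK j * K2 i k - g k * K3 i j + bK j * K i k v - b k * K2 i j.
Proof.
  rewrite (zsum_ext _ (fun p => gK j * (K i p v * K p k v) - g k * (K i p v * K2 p j)
                               + bK j * (K i p v * kdelta p k) - b k * (K i p v * K p j v))).
  - zsum_lin. rewrite zsum_kdelta_sym. unfold K3, K2, gK, bK. ring.
  - intro p.
    rewrite (zsum_ext _ (fun r => (K i p v * K p k v) * (g r * K r j v)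
               - (g k * K i p v) * (K p r v * K r j v)
               + (K i p v * kdelta p k) * (b r * K r j v)
               - (b k * K i p v) * (K r j v * kdelta p r)))
      by (intro; rewrite Nijenhuis_form; ring).
    zsum_lin. rewrite zsum_kdelta. unfold K3, K2, gK, bK. ring.
Qed.

Lemma Haantjes_term4 i j k :
  zsum (fun p => zsum (fun r => Nijenhuis K p j k v * K i r v * K r p v)) =
  g j * K3 i k - g k * K3 i j + b j * K2 i k - b k * K2 i j.
Proof.
  rewrite (zsum_ext _ (fun p => g j * (K2 i p * K p k v) - g k * (K2 i p * K p j v)
                               + b j * (K2 i p * kdelta p k) - b k * (K2 i p * kdelta p j))).
  - pose proof K2_rows_finsupp. zsum_lin. rewrite !zsum_kdelta_sym, !K2_K_assoc.
    unfold K3, K2, gK, bK. ring.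
  - intro p.
    rewrite (zsum_ext _ (fun r => Nijenhuis K p j k v * (K i r v * K r p v))) by (intro; ring).
    rewrite zsum_scal, Nijenhuis_form by finsupp_auto. unfold K3, K2, gK, bK. ring.
Qed.

Theorem Haantjes_zero_of_Nijenhuis_form i j k : Haantjes K i j k v = 0.
Proof.
  unfold Haantjes.
  rewrite Haantjes_term1, Haantjes_term2, Haantjes_term3, Haantjes_term4. ring.
Qed.

End HaantjesVanishing.

(* A sparse row or gradient is a list of (coefficient, index) pairs:
   [row_A i u] lists the nonzero entries A^i_a(u) with their columns a, and
   [grad_A i k u] the partial derivatives of A^i_k at u with their variables. *)
Fixpoint lcomb (L : list (R * Z)) (h : Z -> R) : R :=
  match L with
  | [] => 0
  | (c, a) :: L' => c * h a + lcomb L' h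
  end.

Lemma finsupp_lcomb L : finsupp (fun p => lcomb L (fun a => kdelta a p)).
Proof.
  induction L as [|[c a] L IH]; cbn [lcomb].
  - apply finsupp_zero.
  - finsupp_auto.
Qed.

Lemma zsum_lcomb L h : zsum (fun p => h p * lcomb L (fun a => kdelta a p)) = lcomb L h.
Proof.
  induction L as [|[c a] L IH]; cbn [lcomb].
  - apply zsum_zero. intro. ring.
  - rewrite (zsum_ext _ (fun p => c * (h p * kdelta a p) + h p * lcomb L (fun a => kdelta a p)))
      by (intro; ring).
    pose proof finsupp_lcomb. zsum_lin. now rewrite zsum_kdelta, IH.
Qed.

Definition row_A (i : Z) (u : point) : list (R * Z) :=
  if (i <? -2)%Z then
    [(IZR (- i) * u (i - 1)%Z - IZR (- i - 2) * u (i + 1)%Z + u i * u 1%Z, 0%Z);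
     (u 0%Z * u i, 1%Z); (u 0%Z, (i + 1)%Z); (u 0%Z, (i - 1)%Z)]
  else if (i =? -2)%Z then
    [(u (-2)%Z * u 1%Z + 2 * u (-3)%Z, 0%Z); (u 0%Z * u (-2)%Z, 1%Z);
     (u 0%Z, (-3)%Z); (2 * u 0%Z, (-1)%Z)]
  else if (i =? -1)%Z then
    [(u (-1)%Z * u 1%Z + u (-2)%Z, 0%Z); (u 0%Z * u (-1)%Z, 1%Z); (u 0%Z, (-2)%Z)]
  else if (i =? 0)%Z then
    [(u 0%Z * u 1%Z, 0%Z); (u 0%Z ^ 2, 1%Z)]
  else if (i =? 1)%Z then
    [(2 * u 2%Z - u 1%Z ^ 2, 0%Z); (- (u 0%Z * u 1%Z), 1%Z); (u 0%Z, 2%Z)]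
  else
    [(IZR (i + 1) * u (i + 1)%Z - IZR (i - 1) * u (i - 1)%Z - u i * u 1%Z, 0%Z);
     (- (u 0%Z * u i), 1%Z); (u 0%Z, (i + 1)%Z); (u 0%Z, (i - 1)%Z)].

Definition grad_A (i k : Z) (u : point) : list (R * Z) :=
  let c0 := kdelta 0 k in let c1 := kdelta 1 k in
  if (i <? -2)%Z then
    [(c0 * IZR (- i), (i - 1)%Z); (- (c0 * IZR (- i - 2)), (i + 1)%Z);
     (c0 * u 1%Z + c1 * u 0%Z, i); (c0 * u i, 1%Z);
     (c1 * u i + kdelta (i + 1) k + kdelta (i - 1) k, 0%Z)]
  else if (i =? -2)%Z then
    [(c0 * u 1%Z + c1 * u 0%Z, (-2)%Z); (c0 * u (-2)%Z, 1%Z); (2 * c0, (-3)%Z);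
     (c1 * u (-2)%Z + kdelta (-3) k + 2 * kdelta (-1) k, 0%Z)]
  else if (i =? -1)%Z then
    [(c0 * u 1%Z + c1 * u 0%Z, (-1)%Z); (c0 * u (-1)%Z, 1%Z); (c0, (-2)%Z);
     (c1 * u (-1)%Z + kdelta (-2) k, 0%Z)]
  else if (i =? 0)%Z then
    [(c0 * u 1%Z + 2 * c1 * u 0%Z, 0%Z); (c0 * u 0%Z, 1%Z)]
  else if (i =? 1)%Z then
    [(2 * c0, 2%Z); (- (2 * c0 * u 1%Z) - c1 * u 0%Z, 1%Z);
     (- (c1 * u 1%Z) + kdelta 2 k, 0%Z)]
  else
    [(c0 * IZR (i + 1), (i + 1)%Z); (- (c0 * IZR (i - 1)), (i - 1)%Z);
     (- (c0 * u 1%Z) - c1 * u 0%Z, i); (- (c0 * u i), 1%Z);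
     (- (c1 * u i) + kdelta (i + 1) k + kdelta (i - 1) k, 0%Z)].

Lemma at_col_kdelta j a c : at_col j a c = c * kdelta a j.
Proof. unfold at_col, kdelta. rewrite Z.eqb_sym. destruct (Z.eqb a j); ring. Qed.

Lemma upd_kdelta v l t : upd v l t = fun m => v m + kdelta m l * (t - v l).
Proof.
  apply functional_extensionality. intro m.
  unfold upd, kdelta. destruct (Z.eqb_spec m l); [subst; ring | ring].
Qed.

Ltac split_row_tests i :=
  destruct (i <? -2)%Z; [|destruct (i =? -2)%Z; [|destruct (i =? -1)%Z;
    [|destruct (i =? 0)%Z; [|destruct (i =? 1)%Z]]]].

Lemma A_row i p u : A i p u = lcomb (row_A i u) (fun a => kdelta a p).
Proof.
  unfold A, row_A. rewrite !at_col_kdelta. split_row_tests i; cbn [lcomb]; ring.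
Qed.

Lemma A_rows_finsupp u i : finsupp (fun p => A i p u).
Proof.
  destruct (finsupp_lcomb (row_A i u)) as [n Hn]. exists n. intros m Hm.
  rewrite A_row. auto.
Qed.

Lemma pder_A l i k u : pder l (A i k) u = lcomb (grad_A i k u) (fun m => kdelta m l).
Proof.
  unfold pder.
  rewrite (Derive_ext _ (fun t => lcomb (row_A i (fun m => u m + kdelta m l * (t - u l)))
                                       (fun a => kdelta a k)))
    by (intro; now rewrite A_row, upd_kdelta).
  apply is_derive_unique. unfold row_A, grad_A.
  split_row_tests i; cbn [lcomb]; auto_derive; trivial; cbn [lcomb]; ring.
Qed.

Definition gamma_A (u : point) (j : Z) : R := u 1%Z * kdelta 0 j + u 0%Z * kdelta 1 j.
Definition beta_A (u : point) (j : Z) : R := -4 * u 0%Z * kdelta 0 j.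

Ltac resolve_index_tests := repeat match goal with
  | |- context [Z.ltb ?a ?b] => destruct (Z.ltb_spec a b); try lia
  | |- context [Z.eqb ?a ?b] => destruct (Z.eqb_spec a b); try lia
  end.

(* Rewrites index expressions such as [i - 1 + 1] to their ring normal form,
   so that equal indices under [u] and [kdelta] become syntactically equal. *)
Ltac normalize_index x :=
  lazymatch x with
  | Z.pos _ => fail | Z.neg _ => fail | Z0 => fail
  | _ => tryif is_var x then fail else
     let H := fresh in assert (H : x = x) by reflexivity; ring_simplify x in H;
     lazymatch type of H with ?y = _ =>
       clear H; tryif constr_eq x y then fail else replace x with y by ring end
  end.

Ltac normalize_indices u := repeat match goal with
  | |- context [u ?x] => normalize_index x
  | |- context [kdelta ?x _] => normalize_index x
  | |- context [kdelta _ ?x] => normalize_index x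
  end.

Ltac expand_chain u :=
  unfold row_A, grad_A; resolve_index_tests; cbn [lcomb];
  rewrite ?pder_A; unfold grad_A, A; rewrite ?at_col_kdelta; resolve_index_tests;
  cbn [lcomb];
  repeat (rewrite opp_IZR || rewrite plus_IZR || rewrite minus_IZR);
  normalize_indices u.

Lemma Nijenhuis_A_lcomb i j k u :
  lcomb (grad_A i k u) (fun m => A m j u) - lcomb (grad_A i j u) (fun m => A m k u)
  - lcomb (row_A i u) (fun p => pder j (A p k) u - pder k (A p j) u)
  = gamma_A u j * A i k u - gamma_A u k * A i j u
    + beta_A u j * kdelta i k - beta_A u k * kdelta i j.
Proof.
  unfold gamma_A, beta_A.
  (* Rows have six shapes, and the rows i - 1, i + 1 must have a fixed shape too. *)
  assert (Hi : (i <= -4 \/ i = -3 \/ i = -2 \/ i = -1 \/ i = 0 \/ i = 1 \/ i = 2 \/ 3 <= i)%Z)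
    by lia.
  destruct Hi as [Hi|[Hi|[Hi|[Hi|[Hi|[Hi|[Hi|Hi]]]]]]]; try subst i; expand_chain u; ring.
Qed.

Lemma zsum_A_row i u h : zsum (fun p => A i p u * h p) = lcomb (row_A i u) h.
Proof.
  rewrite <- zsum_lcomb. apply zsum_ext. intro. rewrite A_row. ring.
Qed.

Lemma zsum_A_col_pder i j k u :
  zsum (fun p => A p j u * pder p (A i k) u) = lcomb (grad_A i k u) (fun m => A m j u).
Proof.
  rewrite <- zsum_lcomb. apply zsum_ext. intro. now rewrite pder_A.
Qed.

Lemma Nijenhuis_A u i j k : Nijenhuis A i j k u =
  gamma_A u j * A i k u - gamma_A u k * A i j u
  + beta_A u j * kdelta i k - beta_A u k * kdelta i j.
Proof.
  unfold Nijenhuis. rewrite !zsum_A_col_pder, zsum_A_row. apply Nijenhuis_A_lcomb.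
Qed.

Theorem proposition4p3 :
  forall (u : point) (i j k : Z), Haantjes A i j k u = 0%R.
Proof.
  intros u i j k. apply (Haantjes_zero_of_Nijenhuis_form A u (gamma_A u) (beta_A u)).
  - apply A_rows_finsupp.
  - unfold gamma_A. finsupp_auto.
  - unfold beta_A. finsupp_auto.
  - exact (Nijenhuis_A u).
Qed.
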